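(* For every $\mathcal{V}$-poset $P$: $\mathcal{P}(P;1,1)$ is the number of maximal antichains of $P$; $\mathcal{P}(P;x,0)=x^{m}$ where $m$ is the number of basic elements of $P$; $\mathcal{P}(P;0,1)$ is the number of maximal antichains of $P$ containing no basic elements; $\mathcal{P}(P;2,1)$ is the number of antichains of $P$ (including the empty set); $\mathcal{P}(P;1,2)$ is the number of cutsets of $P$; $\mathcal{P}(P;2,2)=2^{|P|}$.
   Context: All posets are finite. A $\mathcal{V}$-poset is a poset generated from the empty poset by repeatedly applying: disjoint union of $\mathcal{V}$-posets, adding a new greatest element, adding a new least element. The polynomial $\mathcal{P}$ is defined on $\mathcal{V}$-posets by: $\mathcal{P}(\emptyset;x,y)=1$; $\mathcal{P}(\bullet;x,y)=x$ for the one-element poset; $\mathcal{P}(\bigcup_iP_i;x,y)=\prod_i\mathcal{P}(P_i;x,y)$ for a disjoint union; and $\mathcal{P}(P\cup\{g\};x,y)=\mathcal{P}(P\cup\{\ell\};x,y)=\mathcal{P}(P;x,y)+y^{|P|}$ where $g$ (resp. $\ell$) is a new greatest (resp. least) element. An element $x$ is basic if: (B.1) there are no two incomparable elements $u,v$ with $x>u$ and $x>v$; (B.2) there are no two incomparable elements $u,v$ with $x<u$ and $x<v$; (B.3) there is no element $u$ with $u<x$ such that for all $w\neq u,x$ one has ($u\ge w\iff x\ge w$) and ($u\le w\iff x\le w$). An antichain is a set of pairwise incomparable elements; a maximal antichain is one not properly contained in another antichain. A chain is a linearly ordered subset; a cutset is a subset of $P$ meeting every maximal chain. *)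

From mathcomp Require Import all_boot all_order all_algebra.
Set Implicit Arguments. Unset Strict Implicit. Unset Printing Implicit Defensive.
Import GRing.Theory.

(* Syntax of (nonempty) V-posets: built from the one-element poset by binary
   disjoint union, adding a new greatest element, adding a new least element. *)
Inductive vtree : Type :=
| VPoint : vtree
| VUnion : vtree -> vtree -> vtree
| VTop : vtree -> vtree
| VBot : vtree -> vtree.

Fixpoint vsize (t : vtree) : nat :=
  match t with
  | VPoint => 1
  | VUnion a b => vsize a + vsize b
  | VTop a => (vsize a).+1
  | VBot a => (vsize a).+1
  end.

(* The order on elements 0..vsize t - 1.  In VUnion a b, the elements of a come
   first, those of b are shifted by vsize a.  In VTop a / VBot a the new element
   has index vsize a. *)
Fixpoint vle (t : vtree) (i j : nat) : bool :=
  match t with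
  | VPoint => (i == 0) && (j == 0)
  | VUnion a b =>
      let n := vsize a in
      if (i < n) && (j < n) then vle a i j
      else if (n <= i) && (n <= j) then vle b (i - n) (j - n) else false
  | VTop a =>
      let n := vsize a in
      ((j == n) && (i <= n)) || ((i < n) && (j < n) && vle a i j)
  | VBot a =>
      let n := vsize a in
      ((i == n) && (j <= n)) || ((i < n) && (j < n) && vle a i j)
  end.

Definition vord (t : vtree) : rel 'I_(vsize t) := fun i j => vle t i j.
Arguments vord t : clear implicits.

Fixpoint vpoly (R : comNzRingType) (t : vtree) (x y : R) : R :=
  match t with
  | VPoint => x
  | VUnion a b => vpoly a x y * vpoly b x y
  | VTop a => vpoly a x y + y ^+ vsize a
  | VBot a => vpoly a x y + y ^+ vsize a
  end.

Section PosetNotions.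
Variables (T : finType) (le : rel T).

Definition plt (x y : T) := le x y && (x != y).
Definition incomp (u v : T) := ~~ le u v && ~~ le v u.

Definition antichain (A : {set T}) :=
  [forall u in A, forall v in A, (u != v) ==> incomp u v].
Definition maximal_antichain (A : {set T}) :=
  antichain A && [forall B : {set T}, (antichain B && (A \subset B)) ==> (B == A)].

Definition chain (C : {set T}) := [forall u in C, forall v in C, le u v || le v u].
Definition maximal_chain (C : {set T}) :=
  chain C && [forall D : {set T}, (chain D && (C \subset D)) ==> (D == C)].
Definition cutset (S : {set T}) :=
  [forall C : {set T}, maximal_chain C ==> ~~ [disjoint S & C]].

Definition basic (x : T) :=
  ~~ [exists u, exists v, [&& plt u x, plt v x & incomp u v]] &&
  ~~ [exists u, exists v, [&& plt x u, plt x v & incomp u v]] &&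
  ~~ [exists u, plt u x &&
                 [forall w, ((w != u) && (w != x)) ==>
                            ((le w u == le w x) && (le u w == le x w))]].
End PosetNotions.

From mathcomp Require Import all_boot all_order all_algebra.
Import GRing.Theory.
Set Implicit Arguments. Unset Strict Implicit. Unset Printing Implicit Defensive.

(* Each of the six quantities satisfies the recursion defining [vpoly], so it suffices to follow
   them through the three constructions.  In a disjoint union P + Q the antichains, maximal
   antichains and cutsets are exactly the unions of such sets of P and of Q, and an element is
   basic in P + Q iff it is basic in its component.  Adjoining a top g to a nonempty P adds the
   single maximal antichain {g}, and adds 2^|P| cutsets, the sets containing g, since every
   maximal chain passes through g; g is never basic: either two incomparable elements lie below
   it, or P is a chain and its maximum is a twin below g.  Adjoining a bottom is the dual
   construction, except for basic elements: the new bottom g is basic iff P is a chain, and then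
   g is a twin below the least element m of P, so m stops being basic and the maximal antichain
   {m} takes over the role of {g}. *)

Lemma forall_in_imset (aT rT : finType) (f : aT -> rT) (A : {set aT}) (P : pred rT) :
  [forall y in f @: A, P y] = [forall x in A, P (f x)].
Proof.
apply/forall_inP/forall_inP => [H x xA | H _ /imsetP[x xA ->]]; last exact: H.
exact/H/imset_f.
Qed.

Lemma forall_in_setU (T : finType) (A B : {set T}) (P : pred T) :
  [forall x in A :|: B, P x] = [forall x in A, P x] && [forall x in B, P x].
Proof.
apply/forall_inP/andP => [H | [/forall_inP HA /forall_inP HB] x].
  by split; apply/forall_inP => x xAB; apply: H; rewrite inE xAB ?orbT.
by rewrite inE => /orP[]; [apply: HA | apply: HB].
Qed.

Section PosetNotions.
Variables (T : finType) (le : rel T).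

Definition partial_order := [/\ reflexive le, antisymmetric le & transitive le].

Definition antichains := [set A : {set T} | antichain le A].
Definition maximal_antichains := [set A : {set T} | maximal_antichain le A].
Definition nonbasic_maximal_antichains :=
  [set A : {set T} | maximal_antichain le A & [forall v in A, ~~ basic le v]].
Definition cutsets := [set S : {set T} | cutset le S].
Definition basic_elements := [set x : T | basic le x].

Definition has_incomparable_below x :=
  [exists u, exists v, [&& plt le u x, plt le v x & incomp le u v]].
Definition has_incomparable_above x :=
  [exists u, exists v, [&& plt le x u, plt le x v & incomp le u v]].
Definition has_twin_below x :=
  [exists u, plt le u x &&
     [forall w, ((w != u) && (w != x)) ==> ((le w u == le w x) && (le u w == le x w))]].

Lemma basicE x :
  basic le x =
  [&& ~~ has_incomparable_below x, ~~ has_incomparable_above x & ~~ has_twin_below x].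
Proof. by rewrite /basic andbA. Qed.

Lemma incompC u v : incomp le u v = incomp le v u.
Proof. exact: andbC. Qed.

Lemma totalP : reflect (total le) (~~ [exists a, exists b, incomp le a b]).
Proof.
apply: (iffP idP) => [/existsPn noinc a b | le_total].
  by move/existsPn: (noinc a) => /(_ b); rewrite negb_and !negbK.
by apply/existsPn => a; apply/existsPn => b; rewrite negb_and !negbK le_total.
Qed.

Lemma antichainP (A : {set T}) :
  reflect {in A &, forall u v, u != v -> incomp le u v} (antichain le A).
Proof.
apply: (iffP forall_inP) => [H u v uA vA | H u uA].
  by move/forall_inP: (H u uA) => /(_ v vA) /implyP.
by apply/forall_inP => v vA; apply/implyP; apply: H.
Qed.

Lemma antichain1 x : antichain le [set x].
Proof. by apply/antichainP => u v /set1P-> /set1P->; rewrite eqxx. Qed.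

Lemma antichainU (A B : {set T}) :
  antichain le (A :|: B) = [&& antichain le A, antichain le B &
                              [forall a in A, forall b in B, (a != b) ==> incomp le a b]].
Proof.
apply/antichainP/and3P => [acAB | [/antichainP acA /antichainP acB /forall_inP cross] u v].
  have acD (D : {set T}) : D \subset A :|: B -> antichain le D.
    by move/subsetP=> sDAB; apply/antichainP => u v /sDAB uAB /sDAB vAB; apply: acAB.
  split; [exact/acD/subsetUl | exact/acD/subsetUr |].
  apply/forall_inP => a aA; apply/forall_inP => b bB; apply/implyP.
  by apply: acAB; rewrite inE ?aA ?bB ?orbT.
rewrite !inE => /orP[uA|uB] /orP[vA|vB]; [exact: acA | | | exact: acB].
  by move/forall_inP: (cross u uA) => /(_ v vB) /implyP.
by rewrite eq_sym incompC; move/forall_inP: (cross v vA) => /(_ u uB) /implyP.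
Qed.

Lemma maximal_antichainP (A : {set T}) :
  reflect (antichain le A /\
           forall x, x \notin A -> exists2 a, a \in A & le x a || le a x)
          (maximal_antichain le A).
Proof.
apply: (iffP andP) => -[acA maxA]; split => //.
  move=> x xA; apply/exists_inP; apply: contraNT xA => /exists_inPn incxA.
  have acxA : antichain le (x |: A).
    rewrite antichainU antichain1 acA; apply/forall_inP => _ /set1P->.
    apply/forall_inP => a aA; apply/implyP => _.
    by move: (incxA a aA); rewrite /incomp -negb_or.
  have /implyP := forallP maxA (x |: A).
  by rewrite acxA subsetUr => /(_ isT) /eqP <-; rewrite setU11.
apply/forallP => B; apply/implyP => /andP[/antichainP acB AB].
rewrite eqEsubset AB andbT; apply/subsetP => x xB; apply: contraT => xA.
have [a aA cmp] := maxA x xA.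
have xa : x != a by apply: contraNneq xA => ->.
have := acB x a xB (subsetP AB a aA) xa.
by rewrite /incomp -negb_or cmp.
Qed.

Lemma maximal_antichain_neq0 (x0 : T) (A : {set T}) : maximal_antichain le A -> A != set0.
Proof.
case/maximal_antichainP => _ maxA; apply/set0Pn.
by case: (boolP (x0 \in A)) => [x0A | /maxA[a aA _]]; [exists x0 | exists a].
Qed.

Lemma chainP (C : {set T}) : reflect {in C &, forall u v, le u v || le v u} (chain le C).
Proof.
apply: (iffP forall_inP) => [H u v uC vC | H u uC].
  by move/forall_inP: (H u uC) => /(_ v vC).
by apply/forall_inP => v vC; apply: H.
Qed.

Lemma chain0 : chain le set0.
Proof. by apply/chainP => u; rewrite inE. Qed.

Lemma chainU (A B : {set T}) :
  chain le (A :|: B) = [&& chain le A, chain le B &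
                          [forall a in A, forall b in B, le a b || le b a]].
Proof.
apply/chainP/and3P => [chAB | [/chainP chA /chainP chB /forall_inP cross] u v].
  have chD (D : {set T}) : D \subset A :|: B -> chain le D.
    by move/subsetP=> sDAB; apply/chainP => u v /sDAB uAB /sDAB vAB; apply: chAB.
  split; [exact/chD/subsetUl | exact/chD/subsetUr |].
  apply/forall_inP => a aA; apply/forall_inP => b bB.
  by apply: chAB; rewrite inE ?aA ?bB ?orbT.
rewrite !inE => /orP[uA|uB] /orP[vA|vB]; [exact: chA | | | exact: chB].
  by move/forall_inP: (cross u uA); apply.
by rewrite orbC; move/forall_inP: (cross v vA); apply.
Qed.

Lemma cutsetP (S : {set T}) :
  reflect (forall C, maximal_chain le C -> exists2 x, x \in S & x \in C) (cutset le S).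
Proof.
apply: (iffP forallP) => [H C mC | H C]; last first.
  by apply/implyP => /H[x xS xC]; apply/pred0Pn; exists x; rewrite /= xS.
by have /pred0Pn[x /andP[xS xC]] := implyP (H C) mC; exists x.
Qed.

Hypothesis le_refl : reflexive le.

Lemma chain1 x : chain le [set x].
Proof. by apply/chainP => u v /set1P-> /set1P->; rewrite le_refl. Qed.

Lemma maximal_chainP (C : {set T}) :
  reflect (chain le C /\ forall x, x \notin C -> exists2 c, c \in C & incomp le x c)
          (maximal_chain le C).
Proof.
apply: (iffP andP) => -[chC maxC]; split => //.
  move=> x xC; apply/exists_inP; apply: contraNT xC => /exists_inPn cmpxC.
  have chxC : chain le (x |: C).
    rewrite chainU chain1 chC; apply/forall_inP => _ /set1P->.
    by apply/forall_inP => c cC; move: (cmpxC c cC); rewrite negb_and !negbK.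
  have /implyP := forallP maxC (x |: C).
  by rewrite chxC subsetUr => /(_ isT) /eqP <-; rewrite setU11.
apply/forallP => D; apply/implyP => /andP[/chainP chD CD].
rewrite eqEsubset CD andbT; apply/subsetP => x xD; apply: contraT => xC.
have [c cC] := maxC x xC; rewrite /incomp -negb_or => /negP[].
exact: chD xD (subsetP CD c cC).
Qed.

Lemma maximal_chain_neq0 (x0 : T) (C : {set T}) : maximal_chain le C -> C != set0.
Proof.
case/maximal_chainP => _ maxC; apply/set0Pn.
by case: (boolP (x0 \in C)) => [x0C | /maxC[c cC _]]; [exists x0 | exists c].
Qed.

End PosetNotions.

Definition dual_rel (T : Type) (le : rel T) : rel T := fun x y => le y x.

Section Duality.
Variables (T : finType) (le : rel T).

Lemma partial_order_dual : partial_order le -> partial_order (dual_rel le).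
Proof.
case=> le_refl le_anti le_trans; split => // [x y | y x z xy yz].
  by rewrite andbC => /le_anti.
exact: le_trans yz xy.
Qed.

Lemma incomp_dual u v : incomp (dual_rel le) u v = incomp le u v.
Proof. exact: incompC. Qed.

Lemma antichain_dual A : antichain (dual_rel le) A = antichain le A.
Proof.
apply/antichainP/antichainP => acA u v uA vA uv;
  by [rewrite -incomp_dual; apply: acA | rewrite incomp_dual; apply: acA].
Qed.

Lemma maximal_antichain_dual A :
  maximal_antichain (dual_rel le) A = maximal_antichain le A.
Proof.
rewrite /maximal_antichain antichain_dual; congr (_ && _).
by apply: eq_forallb => B; rewrite antichain_dual.
Qed.

Lemma chain_dual C : chain (dual_rel le) C = chain le C.
Proof. by apply/chainP/chainP => chC u v uC vC; rewrite orbC; apply: chC. Qed.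

Lemma maximal_chain_dual C : maximal_chain (dual_rel le) C = maximal_chain le C.
Proof.
rewrite /maximal_chain chain_dual; congr (_ && _).
by apply: eq_forallb => D; rewrite chain_dual.
Qed.

Lemma cutset_dual S : cutset (dual_rel le) S = cutset le S.
Proof. by apply: eq_forallb => C; rewrite maximal_chain_dual. Qed.

Lemma antichains_dual : antichains (dual_rel le) = antichains le.
Proof. by apply/setP => A; rewrite !inE antichain_dual. Qed.

Lemma maximal_antichains_dual : maximal_antichains (dual_rel le) = maximal_antichains le.
Proof. by apply/setP => A; rewrite !inE maximal_antichain_dual. Qed.

Lemma cutsets_dual : cutsets (dual_rel le) = cutsets le.
Proof. by apply/setP => S; rewrite !inE cutset_dual. Qed.

Lemma plt_dual u v : plt (dual_rel le) u v = plt le v u.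
Proof. by rewrite /plt eq_sym. Qed.

Lemma has_incomparable_above_dual x :
  has_incomparable_above (dual_rel le) x = has_incomparable_below le x.
Proof.
by apply: eq_existsb => u; apply: eq_existsb => v; rewrite !plt_dual incomp_dual.
Qed.

End Duality.

Lemma exists_greatest (T : finType) (le : rel T) (x0 : T) :
  partial_order le -> total le -> exists m, forall c, le c m.
Proof.
case=> le_refl _ le_trans le_total.
case: (arg_maxnP (fun m => #|[set c | le c m]|) (isT : predT x0)) => m _ maxm.
exists m => c; case/orP: (le_total c m) => // le_mc.
have sub : [set d | le d m] \subset [set d | le d c].
  by apply/subsetP => d; rewrite !inE => le_dm; apply: le_trans le_dm le_mc.
have /eqP eq_down : [set d | le d m] == [set d | le d c] by rewrite eqEcard sub; apply: maxm.
have : c \in [set d | le d c] by rewrite inE le_refl.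
by rewrite -eq_down inE.
Qed.

Lemma exists_least (T : finType) (le : rel T) (x0 : T) :
  partial_order le -> total le -> exists m, forall c, le m c.
Proof.
move=> /partial_order_dual le_po le_total.
by apply: (exists_greatest x0 le_po) => x y; apply: le_total.
Qed.

Definition least (T : finType) (le : rel T) (m : T) := [forall c, le m c].

Section LeastElement.
Variables (T : finType) (le : rel T).
Hypothesis le_po : partial_order le.

Lemma least_unique m1 m2 : least le m1 -> least le m2 -> m1 = m2.
Proof.
case: le_po => _ le_anti _ /forallP l1 /forallP l2.
by apply: le_anti; rewrite l1 l2.
Qed.

Lemma plt_least u m : least le m -> plt le u m = false.
Proof.
case: le_po => _ le_anti _ /forallP lm; rewrite /plt.
by case le_um: (le u m) => //=; apply/negbTE/negPn/eqP/le_anti; rewrite le_um lm.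
Qed.

Lemma antichain_least (A : {set T}) m :
  least le m -> m \in A -> antichain le A -> A = [set m].
Proof.
move=> /forallP lm mA /antichainP acA; apply/setP => x; rewrite inE.
apply/idP/eqP => [xA | ->] //; case: (eqVneq x m) => // xm.
by have := acA m x mA xA; rewrite eq_sym xm /incomp lm => /(_ isT).
Qed.

Lemma maximal_antichain1_least m : least le m -> maximal_antichain le [set m].
Proof.
move=> /forallP lm; apply/maximal_antichainP; split; first exact: antichain1.
by move=> x _; exists m; rewrite ?set11 ?lm ?orbT.
Qed.

Lemma exists_least_basicE (x0 : T) :
  [exists m, least le m && basic le m] = ~~ [exists a, exists b, incomp le a b].
Proof.
apply/existsP/totalP => [[m /andP[lm]] | le_total].
  have plt_m c d : incomp le c d -> plt le m c.
    move: lm => /forallP lm cd; rewrite /plt lm /=.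
    by apply: contraTneq cd => <-; rewrite /incomp lm.
  rewrite basicE => /and3P[_ noinc _]; apply/totalP; apply: contra noinc.
  move=> /existsP[a /existsP[b ab]]; apply/existsP; exists a; apply/existsP; exists b.
  by rewrite ab (plt_m a b) // (plt_m b a) // incompC.
have [m lm] : exists m, least le m.
  by have [m le_m] := exists_least x0 le_po le_total; exists m; apply/forallP.
exists m; rewrite lm /= basicE; apply/and3P; split.
- by apply/existsPn => u; apply/existsPn => v; rewrite (plt_least _ lm).
- apply/existsPn => u; apply/existsPn => v; apply/negP => /and3P[_ _].
  by move/totalP: le_total => /existsPn/(_ u)/existsPn/(_ v)/negP.
- by apply/existsPn => u; rewrite (plt_least _ lm).
Qed.

Lemma card_basic_least :
  #|[set x | basic le x & least le x]| = [exists m, least le m && basic le m].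
Proof.
case: existsP => [[m /andP[lm bm]] | none].
  rewrite -[RHS](cards1 m); apply: eq_card => x; rewrite !inE.
  by apply/andP/eqP => [[_ lx] | ->]; [apply: least_unique | rewrite lm bm].
apply/eqP; rewrite cards_eq0; apply/eqP/setP => x; rewrite !inE.
by apply/negP => /andP[bx lx]; apply: none; exists x; rewrite lx bx.
Qed.

Lemma card_maximal_antichains_nonbasic_or_least :
  #|[set A | maximal_antichain le A & [forall v in A, ~~ basic le v || least le v]]| =
  #|nonbasic_maximal_antichains le| + [exists m, least le m && basic le m].
Proof.
case: existsP => [[m /andP[lm bm]] | none]; last first.
  rewrite addn0; apply: eq_card => A; rewrite !inE; congr (_ && _).
  apply: eq_forallb_in => v _; case: (boolP (least le v)) => lv; rewrite ?orbF ?orbT //.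
  by apply/esym/negP => bv; apply: none; exists v; rewrite lv bv.
have m_basic : [set m] \notin nonbasic_maximal_antichains le.
  by rewrite inE negb_and; apply/orP; right; apply/forall_inPn; exists m; rewrite ?set11 ?bm.
transitivity #|[set m] |: nonbasic_maximal_antichains le|; last first.
  by rewrite cardsU1 m_basic addnC.
apply: eq_card => A; rewrite in_setU1 !inE.
apply/andP/orP => [[mA /forall_inP cond] | [/eqP-> | /andP[mA /forall_inP nb]]].
- case: (boolP (m \in A)) => mInA.
    by left; apply/eqP/(antichain_least lm mInA); case/andP: mA.
  right; rewrite mA; apply/forall_inP => v vA; have := cond v vA.
  case: (boolP (least le v)) => [lv | _]; rewrite ?orbF //.
  by move: vA; rewrite -(least_unique lm lv) (negbTE mInA).
- split; first exact: maximal_antichain1_least.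
  by apply/forall_inP => _ /set1P->; rewrite lm orbT.
- by split=> //; apply/forall_inP => v /nb->.
Qed.

End LeastElement.

(** * Order embeddings *)

Section OrderEmbedding.
Variables (T T' : finType) (le : rel T) (le' : rel T') (h : T -> T').
Hypothesis h_inj : injective h.
Hypothesis le_h : forall a b, le' (h a) (h b) = le a b.

Lemma plt_embed a b : plt le' (h a) (h b) = plt le a b.
Proof. by rewrite /plt le_h (inj_eq h_inj). Qed.

Lemma incomp_embed a b : incomp le' (h a) (h b) = incomp le a b.
Proof. by rewrite /incomp !le_h. Qed.

Lemma antichain_imset (A : {set T}) : antichain le' (h @: A) = antichain le A.
Proof.
apply/antichainP/antichainP => acA.
  by move=> a b aA bA ab; rewrite -incomp_embed acA ?imset_f ?(inj_eq h_inj).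
move=> _ _ /imsetP[a aA ->] /imsetP[b bA ->]; rewrite (inj_eq h_inj) incomp_embed.
exact: acA.
Qed.

Lemma chain_imset (C : {set T}) : chain le' (h @: C) = chain le C.
Proof.
apply/chainP/chainP => chC.
  by move=> a b aC bC; rewrite -!le_h chC ?imset_f.
by move=> _ _ /imsetP[a aC ->] /imsetP[b bC ->]; rewrite !le_h chC.
Qed.

Lemma incomparable_above_embed x :
  (forall a z, z \notin codom h -> le' (h a) z -> forall w, le' z w || le' w z) ->
  has_incomparable_above le' (h x) = has_incomparable_above le x.
Proof.
move=> above_comparable.
have in_codom z w : plt le' (h x) z -> incomp le' z w -> z \in codom h.
  case/andP=> le_xz _; apply: contraTT => /above_comparable/(_ le_xz w).
  by rewrite /incomp -negb_or negbK.
apply/existsP/existsP => [[u /existsP[v /and3P[xu xv uv]]] | [a /existsP[b]]].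
  have /codomP[a u_a] := in_codom u v xu uv.
  have /codomP[b v_b] := in_codom v u xv (etrans (incompC _ _ _) uv).
  exists a; apply/existsP; exists b.
  by rewrite -plt_embed -plt_embed -incomp_embed -u_a -v_b xu xv.
by exists (h a); apply/existsP; exists (h b); rewrite !plt_embed incomp_embed.
Qed.

Lemma twin_below_embed x :
  (forall a z, z \notin codom h -> le' z (h a) = false) ->
  (forall a b z, z \notin codom h -> le' (h a) z = le' (h b) z) ->
  has_twin_below le' (h x) = has_twin_below le x.
Proof.
move=> not_below above_uniform.
apply/existsP/existsP => [[u /andP[ux /forallP twin]] | [a /andP[ax /forallP twin]]].
  have /codomP[a u_a] : u \in codom h.
    by apply: contraLR ux => /not_below uN; rewrite /plt uN.
  exists a; rewrite -plt_embed -u_a ux; apply/forallP => w.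
  by have := twin (h w); rewrite u_a !(inj_eq h_inj) !le_h.
exists (h a); rewrite plt_embed ax; apply/forallP => w.
have [/codomP[c ->] | wN] := boolP (w \in codom h).
  by rewrite !(inj_eq h_inj) !le_h; apply: twin.
by rewrite !not_below // (above_uniform a x) // !eqxx implybT.
Qed.

End OrderEmbedding.

Lemma basic_embed (T T' : finType) (le : rel T) (le' : rel T') (h : T -> T') x :
  injective h -> (forall a b, le' (h a) (h b) = le a b) ->
  (forall a z, z \notin codom h -> le' z (h a) = false) ->
  (forall a b z, z \notin codom h -> le' (h a) z = le' (h b) z) ->
  (forall a z, z \notin codom h -> le' (h a) z -> forall w, le' z w || le' w z) ->
  basic le' (h x) = basic le x.
Proof.
move=> h_inj le_h not_below above_uniform above_comparable.
rewrite !basicE (incomparable_above_embed h_inj le_h) ?(twin_below_embed h_inj le_h) //.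
rewrite -!has_incomparable_above_dual.
rewrite (incomparable_above_embed (le := dual_rel le) h_inj (fun a b => le_h b a)) //.
by move=> a z /not_below; rewrite /dual_rel => ->.
Qed.

(** * Adjoining a top or a bottom element *)

Section LiftMax.
Variable n : nat.

Lemma lift_max_inj : injective (@lift n.+1 ord_max : 'I_n -> 'I_n.+1).
Proof. exact: lift_inj. Qed.

Lemma mem_lift_max (A : {set 'I_n}) x : (lift ord_max x \in lift ord_max @: A) = (x \in A).
Proof. exact: mem_imset _ _ lift_max_inj. Qed.

Lemma ord_max_notin_lift (A : {set 'I_n}) : ord_max \notin lift ord_max @: A.
Proof. by apply/imsetP => -[x _ /eqP]; rewrite eq_liftF. Qed.

Lemma notin_codom_lift_max (z : 'I_n.+1) : z \notin codom (lift ord_max) -> z = ord_max.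
Proof. by case: (unliftP ord_max z) => [j ->|//]; rewrite codom_f. Qed.

Lemma mem_lift_preimset (A : {set 'I_n.+1}) z :
  (z \in lift ord_max @: (lift ord_max @^-1: A)) = (z != ord_max) && (z \in A).
Proof.
case: (unliftP ord_max z) => [j ->|->]; last by rewrite eqxx (negbTE (ord_max_notin_lift _)).
by rewrite mem_lift_max inE lift_eqF.
Qed.

Lemma lift_preimset (A : {set 'I_n.+1}) :
  ord_max \notin A -> lift ord_max @: (lift ord_max @^-1: A) = A.
Proof.
move=> maxN; apply/setP => z; rewrite mem_lift_preimset.
by case: eqP => // ->; rewrite (negbTE maxN).
Qed.

Lemma setU1_lift_preimset (A : {set 'I_n.+1}) :
  ord_max \in A -> ord_max |: lift ord_max @: (lift ord_max @^-1: A) = A.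
Proof.
by move=> maxA; apply/setP => z; rewrite in_setU1 mem_lift_preimset; case: eqP => // ->.
Qed.

Lemma card_sets_lift_max (Q : pred {set 'I_n.+1}) :
  #|[set A | Q A]| = #|[set A : {set 'I_n} | Q (lift ord_max @: A)]| +
                     #|[set A : {set 'I_n} | Q (ord_max |: lift ord_max @: A)]|.
Proof.
have lift_inj_sets : injective (fun A : {set 'I_n} => lift ord_max @: A).
  exact/imset_inj/lift_inj.
have add_max_inj : injective (fun A : {set 'I_n} => ord_max |: lift ord_max @: A).
  move=> A B /(congr1 (fun S => S :\ ord_max)).
  by rewrite !setU1K ?ord_max_notin_lift //; apply: lift_inj_sets.
rewrite -(cardsID [set A : {set 'I_n.+1} | ord_max \in A]) addnC.
rewrite -(card_imset _ lift_inj_sets) -(card_imset _ add_max_inj).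
congr (_ + _); apply: eq_card => A'; rewrite !inE.
  apply/idP/imsetP => [/andP[maxN QA'] | [A QA ->]].
    by exists (lift ord_max @^-1: A'); rewrite ?inE lift_preimset.
  by rewrite inE in QA; rewrite ord_max_notin_lift.
apply/idP/imsetP => [/andP[QA' maxA'] | [A QA ->]].
  by exists (lift ord_max @^-1: A'); rewrite ?inE setU1_lift_preimset.
by rewrite inE in QA; rewrite setU11 andbT.
Qed.

Lemma card_all_sets (T : finType) : #|[set: {set T}]| = 2 ^ #|T|.
Proof. by rewrite -powersetT card_powerset cardsT. Qed.

End LiftMax.
Arguments lift_max_inj {n}.

Definition adjoins_top n (le : rel 'I_n) (le' : rel 'I_n.+1) :=
  [/\ forall x y : 'I_n, le' (lift ord_max x) (lift ord_max y) = le x y,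
      forall z, le' z ord_max &
      forall x : 'I_n, le' ord_max (lift ord_max x) = false].

Section AdjoinTop.
Variables (n : nat) (le : rel 'I_n) (le' : rel 'I_n.+1).
Local Notation lift_max := (@lift n.+1 ord_max).
Hypothesis le'_top : adjoins_top le le'.

Let le_lift : forall x y : 'I_n, le' (lift_max x) (lift_max y) = le x y.
Proof. by case: le'_top. Qed.
Let le_top : forall z, le' z ord_max.
Proof. by case: le'_top. Qed.
Let le_top_lift : forall x : 'I_n, le' ord_max (lift_max x) = false.
Proof. by case: le'_top. Qed.

Let incomp_lift (x y : 'I_n) : incomp le' (lift_max x) (lift_max y) = incomp le x y.
Proof. exact: incomp_embed le_lift x y. Qed.
Let incomp_top z : incomp le' z ord_max = false.
Proof. by rewrite /incomp le_top. Qed.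

Lemma partial_order_top : partial_order le -> partial_order le'.
Proof.
case=> le_refl le_anti le_trans; split.
- by move=> z; case: (unliftP ord_max z) => [x ->|->]; rewrite ?le_lift ?le_top.
- move=> u v; case: (unliftP ord_max u) => [x ->|->]; case: (unliftP ord_max v) => [y ->|->];
    rewrite ?le_lift ?le_top ?le_top_lift ?andbF // => /le_anti-> //.
- move=> v u w; case: (unliftP ord_max u) => [x ->|->]; case: (unliftP ord_max v) => [y ->|->];
    case: (unliftP ord_max w) => [z ->|->]; rewrite ?le_lift ?le_top ?le_top_lift //.
  exact: le_trans.
Qed.

Lemma antichain_top (A : {set 'I_n}) :
  antichain le' (ord_max |: lift_max @: A) = (A == set0).
Proof.
apply/idP/eqP => [acA | ->]; last by rewrite imset0 setU0 antichain1.
apply/eqP; apply: contraTT acA => /set0Pn[x xA]; apply/negP => /antichainP acA.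
have := acA ord_max (lift_max x); rewrite setU11 in_setU1 mem_lift_max xA orbT eq_liftF.
by rewrite incompC incomp_top => /(_ isT isT isT).
Qed.

Lemma card_antichains_top : #|antichains le'| = #|antichains le| + 1.
Proof.
rewrite (card_sets_lift_max (antichain le')).
have -> : [set A : {set 'I_n} | antichain le' (lift_max @: A)] = antichains le.
  by apply/setP => A; rewrite !inE (antichain_imset lift_max_inj le_lift).
have -> : [set A : {set 'I_n} | antichain le' (ord_max |: lift_max @: A)] = [set set0].
  by apply/setP => A; rewrite !inE antichain_top.
by rewrite cards1.
Qed.

Lemma maximal_antichain_top (A : {set 'I_n}) :
  maximal_antichain le' (ord_max |: lift_max @: A) = (A == set0).
Proof.
apply/maximal_antichainP/eqP => [[acA _] | ->]; first by apply/eqP; rewrite -antichain_top.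
rewrite imset0 setU0; split; first exact: antichain1.
by move=> z _; exists ord_max; rewrite ?set11 ?le_top.
Qed.

Lemma maximal_antichain_lift (x0 : 'I_n) (A : {set 'I_n}) :
  maximal_antichain le' (lift_max @: A) = maximal_antichain le A.
Proof.
apply/maximal_antichainP/idP => [[acA maxA] | mA].
  apply/maximal_antichainP; split; first by rewrite -(antichain_imset lift_max_inj le_lift).
  move=> x; rewrite -(mem_lift_max A) => /maxA[_ /imsetP[a aA ->]].
  by rewrite !le_lift; exists a.
have /set0Pn[a aA] := maximal_antichain_neq0 x0 mA.
case/maximal_antichainP: mA => acA maxA.
split; first by rewrite (antichain_imset lift_max_inj le_lift).
move=> z; case: (unliftP ord_max z) => [x ->|-> _].
  by rewrite mem_lift_max => /maxA[b bA cmp]; exists (lift_max b); rewrite ?mem_lift_max ?le_lift.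
by exists (lift_max a); rewrite ?mem_lift_max ?le_top ?orbT.
Qed.

Lemma card_maximal_antichains_top (x0 : 'I_n) :
  #|maximal_antichains le'| = #|maximal_antichains le| + 1.
Proof.
rewrite (card_sets_lift_max (maximal_antichain le')).
have -> : [set A : {set 'I_n} | maximal_antichain le' (lift_max @: A)] = maximal_antichains le.
  by apply/setP => A; rewrite !inE (maximal_antichain_lift x0).
have -> : [set A : {set 'I_n} | maximal_antichain le' (ord_max |: lift_max @: A)] = [set set0].
  by apply/setP => A; rewrite !inE maximal_antichain_top.
by rewrite cards1.
Qed.

Hypothesis le_po : partial_order le.

Let le'_refl : reflexive le'.
Proof. by case: (partial_order_top le_po). Qed.

Lemma chain_top (C : {set 'I_n}) : chain le' (ord_max |: lift_max @: C) = chain le C.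
Proof.
have cross : [forall a in [set ord_max], forall b in lift_max @: C, le' a b || le' b a].
  by apply/forall_inP => _ /set1P->; apply/forall_inP => b _; rewrite le_top orbT.
by rewrite chainU chain1 // (chain_imset le_lift) cross andbT.
Qed.

Lemma maximal_chain_has_top (C : {set 'I_n.+1}) : maximal_chain le' C -> ord_max \in C.
Proof.
case/(maximal_chainP le'_refl) => _ maxC.
by apply: contraT => /maxC[c _]; rewrite incompC incomp_top.
Qed.

Lemma maximal_chain_top (C : {set 'I_n}) :
  maximal_chain le' (ord_max |: lift_max @: C) = maximal_chain le C.
Proof.
have le_refl : reflexive le by case: le_po.
apply/(maximal_chainP le'_refl)/(maximal_chainP le_refl); rewrite chain_top => -[chC maxC].
  split=> // x xC.
  have /maxC[c'] : lift_max x \notin ord_max |: lift_max @: C.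
    by rewrite in_setU1 mem_lift_max lift_eqF.
  rewrite in_setU1 => /orP[/eqP-> | /imsetP[c cC ->]]; first by rewrite incomp_top.
  by rewrite incomp_lift; exists c.
split=> // z; rewrite in_setU1 negb_or => /andP[].
case: (unliftP ord_max z) => [x ->|->]; rewrite ?eqxx // mem_lift_max => _ /maxC[c cC inc].
by exists (lift_max c); rewrite ?in_setU1 ?mem_lift_max ?cC ?orbT ?incomp_lift.
Qed.

Lemma cutset_top_lift (S : {set 'I_n}) : cutset le' (lift_max @: S) = cutset le S.
Proof.
apply/cutsetP/cutsetP => cutS C.
  rewrite -maximal_chain_top => /cutS[_ /imsetP[x xS ->]].
  by rewrite in_setU1 mem_lift_max lift_eqF => xC; exists x.
move=> mC; have eqC := setU1_lift_preimset (maximal_chain_has_top mC).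
rewrite -eqC maximal_chain_top in mC; have [x xS xC] := cutS _ mC.
by exists (lift_max x); rewrite ?mem_lift_max // -eqC in_setU1 mem_lift_max xC orbT.
Qed.

Lemma cutset_top (S : {set 'I_n}) : cutset le' (ord_max |: lift_max @: S).
Proof. by apply/cutsetP => C /maximal_chain_has_top maxC; exists ord_max; rewrite ?setU11. Qed.

Lemma card_cutsets_top : #|cutsets le'| = #|cutsets le| + 2 ^ n.
Proof.
rewrite (card_sets_lift_max (cutset le')).
have -> : [set S : {set 'I_n} | cutset le' (lift_max @: S)] = cutsets le.
  by apply/setP => S; rewrite !inE cutset_top_lift.
have -> : [set S : {set 'I_n} | cutset le' (ord_max |: lift_max @: S)] = setT.
  by apply/setP => S; rewrite !inE cutset_top.
by rewrite card_all_sets card_ord.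
Qed.

Lemma basic_top_lift x : basic le' (lift_max x) = basic le x.
Proof.
apply: basic_embed lift_max_inj le_lift _ _ _ => [a z | a b z | a z].
- by move/notin_codom_lift_max->; rewrite le_top_lift.
- by move/notin_codom_lift_max->; rewrite !le_top.
- by move/notin_codom_lift_max-> => _ w; rewrite le_top orbT.
Qed.

Lemma basic_top (x0 : 'I_n) : basic le' ord_max = false.
Proof.
apply/negbTE; rewrite basicE negb_and negb_and !negbK.
case: (boolP [exists a, exists b, incomp le a b]) => [/existsP[a /existsP[b ab]] | /totalP].
  apply/orP; left; apply/existsP; exists (lift_max a); apply/existsP; exists (lift_max b).
  by rewrite incomp_lift ab /plt !le_top !lift_eqF.
move=> /(exists_greatest x0 le_po)[m le_m].
do 2 (apply/orP; right); apply/existsP; exists (lift_max m).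
rewrite /plt le_top lift_eqF /=; apply/forallP => w; apply/implyP.
case: (unliftP ord_max w) => [c ->|->]; rewrite ?eqxx ?andbF //.
rewrite (inj_eq lift_max_inj) !le_lift le_m le_top le_top_lift lift_eqF andbT /=.
case: le_po => _ le_anti _; apply: contraNT; rewrite eqbF_neg negbK => le_mc.
by apply/eqP/le_anti; rewrite le_mc le_m.
Qed.

Lemma card_basic_elements_top (x0 : 'I_n) :
  #|basic_elements le'| = #|basic_elements le|.
Proof.
have -> : basic_elements le' = lift_max @: basic_elements le.
  apply/setP => z; case: (unliftP ord_max z) => [x ->|->].
    by rewrite mem_lift_max !inE basic_top_lift.
  by rewrite inE (basic_top x0) (negbTE (ord_max_notin_lift _)).
exact: card_imset lift_max_inj.
Qed.

Lemma card_nonbasic_maximal_antichains_top (x0 : 'I_n) :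
  #|nonbasic_maximal_antichains le'| = #|nonbasic_maximal_antichains le| + 1.
Proof.
rewrite (card_sets_lift_max
  (fun A => maximal_antichain le' A && [forall v in A, ~~ basic le' v])).
have -> : [set A : {set 'I_n} | maximal_antichain le' (lift_max @: A) &&
             [forall v in lift_max @: A, ~~ basic le' v]] = nonbasic_maximal_antichains le.
  apply/setP => A; rewrite !inE (maximal_antichain_lift x0) forall_in_imset.
  by congr (_ && _); apply: eq_forallb => v; rewrite basic_top_lift.
have -> : [set A : {set 'I_n} | maximal_antichain le' (ord_max |: lift_max @: A) &&
             [forall v in ord_max |: lift_max @: A, ~~ basic le' v]] = [set set0].
  apply/setP => A; rewrite !inE maximal_antichain_top.
  case: eqP => //= ->; rewrite imset0 setU0.
  by apply/forall_inP => _ /set1P->; rewrite (basic_top x0).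
by rewrite cards1.
Qed.

End AdjoinTop.

Definition adjoins_bottom n (le : rel 'I_n) (le' : rel 'I_n.+1) :=
  adjoins_top (dual_rel le) (dual_rel le').

Section AdjoinBottom.
Variables (n : nat) (le : rel 'I_n) (le' : rel 'I_n.+1).
Local Notation lift_max := (@lift n.+1 ord_max).
Hypothesis le'_bot : adjoins_bottom le le'.

Let le_lift : forall x y : 'I_n, le' (lift_max x) (lift_max y) = le x y.
Proof. by case: le'_bot => le_lift _ _ x y; apply: le_lift. Qed.
Let le_bot : forall z, le' ord_max z.
Proof. by case: le'_bot. Qed.
Let le_lift_bot : forall x : 'I_n, le' (lift_max x) ord_max = false.
Proof. by case: le'_bot. Qed.

Lemma partial_order_bot : partial_order le -> partial_order le'.
Proof. by move/partial_order_dual/(partial_order_top le'_bot)/partial_order_dual. Qed.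

Lemma card_antichains_bot : #|antichains le'| = #|antichains le| + 1.
Proof. by rewrite -antichains_dual -(antichains_dual le) (card_antichains_top le'_bot). Qed.

Lemma card_maximal_antichains_bot (x0 : 'I_n) :
  #|maximal_antichains le'| = #|maximal_antichains le| + 1.
Proof.
rewrite -maximal_antichains_dual -(maximal_antichains_dual le).
exact: card_maximal_antichains_top le'_bot x0.
Qed.

Lemma card_cutsets_bot : partial_order le -> #|cutsets le'| = #|cutsets le| + 2 ^ n.
Proof.
move/partial_order_dual => le_po; rewrite -cutsets_dual -(cutsets_dual le).
exact: card_cutsets_top le'_bot le_po.
Qed.

Hypothesis le_po : partial_order le.

Lemma twin_below_bot_lift x :
  has_twin_below le' (lift_max x) = has_twin_below le x || least le x.
Proof.
case: le_po => le_refl le_anti _.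
apply/existsP/orP => [[u /andP[ux /forallP twin]] |
                      [/existsP[a /andP[ax /forallP twin]] | /forallP lx]].
- case: (unliftP ord_max u) ux twin => [a ->|->] ux twin.
    left; apply/existsP; exists a; rewrite -(plt_embed lift_max_inj le_lift) ux.
    by apply/forallP => w; have := twin (lift_max w); rewrite !(inj_eq lift_max_inj) !le_lift.
  right; apply/forallP => c; case: (eqVneq c x) => [-> // | cx].
  have := twin (lift_max c); rewrite (inj_eq lift_max_inj) lift_eqF cx le_lift_bot le_bot.
  by rewrite !le_lift => /andP[_ /eqP <-].
- exists (lift_max a); rewrite (plt_embed lift_max_inj le_lift) ax; apply/forallP => w.
  case: (unliftP ord_max w) => [c ->|->]; last by rewrite !le_bot !le_lift_bot !eqxx implybT.
  by rewrite !(inj_eq lift_max_inj) !le_lift; apply: twin.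
- exists ord_max; rewrite /plt le_bot eq_liftF /=; apply/forallP => w.
  case: (unliftP ord_max w) => [c ->|->]; last by rewrite eqxx.
  rewrite (inj_eq lift_max_inj) lift_eqF le_lift_bot le_bot !le_lift lx /= andbT.
  apply/implyP => cx; rewrite eq_sym eqbF_neg; apply: contra cx => le_cx.
  by apply/eqP/le_anti; rewrite le_cx lx.
Qed.

Lemma basic_bot_lift x : basic le' (lift_max x) = basic le x && ~~ least le x.
Proof.
rewrite !basicE twin_below_bot_lift negb_or.
rewrite (incomparable_above_embed lift_max_inj le_lift); last first.
  by move=> a z /notin_codom_lift_max->; rewrite le_lift_bot.
rewrite -!has_incomparable_above_dual.
rewrite (incomparable_above_embed (le := dual_rel le) lift_max_inj (fun a b => le_lift b a)).
  by rewrite !andbA.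
by move=> a z /notin_codom_lift_max-> _ w; rewrite /dual_rel le_bot orbT.
Qed.

Lemma basic_bot (x0 : 'I_n) : basic le' ord_max = [exists m, least le m && basic le m].
Proof.
have nothing_below u : plt le' u ord_max = false.
  by case: (unliftP ord_max u) => [a ->|->]; rewrite /plt ?le_lift_bot ?eqxx ?andbF.
rewrite (exists_least_basicE le_po x0) basicE.
have -> : has_incomparable_above le' ord_max = [exists a, exists b, incomp le a b].
  apply/existsP/existsP => [[u /existsP[v /and3P[]]] | [a /existsP[b ab]]].
    case: (unliftP ord_max u) => [a ->|->]; last by rewrite /plt eqxx andbF.
    case: (unliftP ord_max v) => [b ->|->]; last by rewrite /plt eqxx andbF.
    by rewrite (incomp_embed le_lift) => _ _ ab; exists a; apply/existsP; exists b.
  exists (lift_max a); apply/existsP; exists (lift_max b).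
  by rewrite /plt !le_bot !eq_liftF (incomp_embed le_lift).
have -> : has_incomparable_below le' ord_max = false.
  by apply/existsPn => u; apply/existsPn => v; rewrite nothing_below.
have -> : has_twin_below le' ord_max = false by apply/existsPn => u; rewrite nothing_below.
by rewrite andbT.
Qed.

Lemma card_basic_elements_bot (x0 : 'I_n) :
  #|basic_elements le'| = #|basic_elements le|.
Proof.
rewrite (cardsD1 ord_max) inE (basic_bot x0) -(card_basic_least le_po).
rewrite -[in RHS](cardsID [set x | least le x]); congr (_ + _).
  by apply: eq_card => x; rewrite !inE.
have -> : basic_elements le' :\ ord_max =
          lift_max @: (basic_elements le :\: [set x | least le x]).
  apply/setP => z; case: (unliftP ord_max z) => [x ->|->].
    by rewrite in_setD1 lift_eqF mem_lift_max !inE basic_bot_lift /= andbC.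
  by rewrite setD11 (negbTE (ord_max_notin_lift _)).
exact: card_imset lift_max_inj.
Qed.

Lemma card_nonbasic_maximal_antichains_bot (x0 : 'I_n) :
  #|nonbasic_maximal_antichains le'| = #|nonbasic_maximal_antichains le| + 1.
Proof.
rewrite (card_sets_lift_max
  (fun A => maximal_antichain le' A && [forall v in A, ~~ basic le' v])).
have -> : [set A : {set 'I_n} | maximal_antichain le' (lift_max @: A) &&
             [forall v in lift_max @: A, ~~ basic le' v]] =
          [set A | maximal_antichain le A & [forall v in A, ~~ basic le v || least le v]].
  apply/setP => A; rewrite !inE -maximal_antichain_dual.
  rewrite (maximal_antichain_lift le'_bot x0) maximal_antichain_dual forall_in_imset.
  by congr (_ && _); apply: eq_forallb => v; rewrite basic_bot_lift negb_and negbK.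
rewrite card_maximal_antichains_nonbasic_or_least // -addnA; congr (_ + _).
have -> : [set A : {set 'I_n} | maximal_antichain le' (ord_max |: lift_max @: A) &&
             [forall v in ord_max |: lift_max @: A, ~~ basic le' v]] =
          [set A | (A == set0) && ~~ basic le' ord_max].
  apply/setP => A; rewrite !inE -maximal_antichain_dual (maximal_antichain_top le'_bot).
  case: eqP => //= ->; rewrite imset0 setU0.
  by apply/forall_inP/idP => [/(_ ord_max (set11 _)) | nb _ /set1P->].
rewrite (basic_bot x0); case: existsP => _ /=.
  by rewrite (_ : [set A | _] = set0) ?cards0 //; apply/setP => A; rewrite !inE andbF.
by rewrite (_ : [set A | _] = [set set0]) ?cards1 //; apply/setP => A; rewrite !inE andbT.
Qed.

End AdjoinBottom.

(** * Disjoint unions *)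

Section ShiftSets.
Variables m n : nat.
Local Notation rshift := (@rshift m n).

Definition setU_shift (A : {set 'I_m}) (B : {set 'I_n}) : {set 'I_(m + n)} :=
  lshift n @: A :|: rshift @: B.

Lemma mem_setU_shift_l A B x : (lshift n x \in setU_shift A B) = (x \in A).
Proof.
rewrite in_setU (mem_imset _ _ (@lshift_inj m n)); case: (x \in A) => //=.
by apply/imsetP => -[y _ /eqP]; rewrite eq_lrshift.
Qed.

Lemma mem_setU_shift_r A B y : (rshift y \in setU_shift A B) = (y \in B).
Proof.
rewrite in_setU (mem_imset _ _ (@rshift_inj m n)) orbC; case: (y \in B) => //=.
by apply/imsetP => -[x _ /eqP]; rewrite eq_rlshift.
Qed.

Lemma notin_codom_lshift z : z \notin codom (lshift n) -> exists y, z = rshift y.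
Proof. by case: (split_ordP z) => [x ->|y ->]; [rewrite codom_f | exists y]. Qed.

Lemma notin_codom_rshift z : z \notin codom rshift -> exists x, z = lshift n x.
Proof. by case: (split_ordP z) => [x ->|y ->]; [exists x | rewrite codom_f]. Qed.

Lemma setU_shift_preimset (C : {set 'I_(m + n)}) :
  setU_shift (lshift n @^-1: C) (rshift @^-1: C) = C.
Proof.
apply/setP => z; case: (split_ordP z) => [x ->|y ->];
  by rewrite ?mem_setU_shift_l ?mem_setU_shift_r inE.
Qed.

Lemma card_setU_shift A B : #|setU_shift A B| = #|A| + #|B|.
Proof.
rewrite cardsU (card_imset _ (@lshift_inj m n)) (card_imset _ (@rshift_inj m n)).
rewrite -[RHS]subn0; congr (_ - _); apply/eqP; rewrite cards_eq0; apply/eqP/setP => z.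
rewrite !inE; apply/negP => /andP[/imsetP[x _ ->] /imsetP[y _ /eqP]].
by rewrite eq_lrshift.
Qed.

Lemma card_sets_shift_mul (Q : pred {set 'I_(m + n)}) QA QB :
  (forall A B, Q (setU_shift A B) = QA A && QB B) ->
  #|[set C | Q C]| = #|[set A | QA A]| * #|[set B | QB B]|.
Proof.
move=> QE; have shift_inj : injective (fun p => setU_shift p.1 p.2).
  move=> [A B] [A' B'] /= eqU; congr pair; apply/setP => x.
    by rewrite -(mem_setU_shift_l A B) eqU mem_setU_shift_l.
  by rewrite -(mem_setU_shift_r A B) eqU mem_setU_shift_r.
rewrite -cardsX -(card_imset _ shift_inj); apply: eq_card => C; rewrite inE.
apply/idP/imsetP => [QC | [[A B]]]; last by rewrite !inE /= => ABQ ->; rewrite QE.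
exists (lshift n @^-1: C, rshift @^-1: C); last by rewrite setU_shift_preimset.
by rewrite !inE /= -QE setU_shift_preimset.
Qed.

End ShiftSets.

Definition is_disjoint_union m n (la : rel 'I_m) (lb : rel 'I_n) (le : rel 'I_(m + n)) :=
  [/\ forall x y, le (lshift n x) (lshift n y) = la x y,
      forall x y, le (rshift m x) (rshift m y) = lb x y,
      forall x y, le (lshift n x) (rshift m y) = false &
      forall x y, le (rshift m y) (lshift n x) = false].

Section DisjointUnion.
Variables (m n : nat) (la : rel 'I_m) (lb : rel 'I_n) (le : rel 'I_(m + n)).
Local Notation lshift := (@lshift m n).
Local Notation rshift := (@rshift m n).
Hypothesis le_union : is_disjoint_union la lb le.

Let le_ll x y : le (lshift x) (lshift y) = la x y. Proof. by case: le_union. Qed.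
Let le_rr x y : le (rshift x) (rshift y) = lb x y. Proof. by case: le_union. Qed.
Let le_lr x y : le (lshift x) (rshift y) = false. Proof. by case: le_union. Qed.
Let le_rl x y : le (rshift y) (lshift x) = false. Proof. by case: le_union. Qed.
Let incomp_lr x y : incomp le (lshift x) (rshift y). Proof. by rewrite /incomp le_lr le_rl. Qed.

Lemma partial_order_union : partial_order la -> partial_order lb -> partial_order le.
Proof.
case=> la_refl la_anti la_trans [lb_refl lb_anti lb_trans]; split.
- by move=> z; case: (split_ordP z) => [x ->|y ->]; rewrite ?le_ll ?le_rr.
- move=> u v; case: (split_ordP u) => [x ->|x ->]; case: (split_ordP v) => [y ->|y ->];
    rewrite ?le_ll ?le_rr ?le_lr ?le_rl //.
    by move/la_anti->.
  by move/lb_anti->.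
- move=> v u w; case: (split_ordP u) => [x ->|x ->]; case: (split_ordP v) => [y ->|y ->];
    case: (split_ordP w) => [z ->|z ->]; rewrite ?le_ll ?le_rr ?le_lr ?le_rl //.
    exact: la_trans.
  exact: lb_trans.
Qed.

Lemma antichain_union A B : antichain le (setU_shift A B) = antichain la A && antichain lb B.
Proof.
have cross : [forall a in lshift @: A, forall b in rshift @: B, (a != b) ==> incomp le a b].
  apply/forall_inP => _ /imsetP[x _ ->]; apply/forall_inP => _ /imsetP[y _ ->].
  by rewrite incomp_lr implybT.
rewrite antichainU (antichain_imset (@lshift_inj m n) le_ll).
by rewrite (antichain_imset (@rshift_inj m n) le_rr) cross andbT.
Qed.

Lemma maximal_antichain_union A B :
  maximal_antichain le (setU_shift A B) = maximal_antichain la A && maximal_antichain lb B.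
Proof.
apply/maximal_antichainP/andP =>
  [[acU maxU] | [/maximal_antichainP[acA maxA] /maximal_antichainP[acB maxB]]].
  move: acU; rewrite antichain_union => /andP[acA acB].
  split; apply/maximal_antichainP; split=> // x.
    rewrite -(mem_setU_shift_l A B) => /maxU[c].
    case: (split_ordP c) => [a ->|b ->]; rewrite ?le_lr ?le_rl // mem_setU_shift_l !le_ll.
    by exists a.
  rewrite -(mem_setU_shift_r A B) => /maxU[c].
  case: (split_ordP c) => [a ->|b ->]; rewrite ?le_lr ?le_rl // mem_setU_shift_r !le_rr.
  by exists b.
split; first by rewrite antichain_union acA acB.
move=> z; case: (split_ordP z) => [x ->|y ->].
  rewrite mem_setU_shift_l => /maxA[a aA cmp].
  by exists (lshift a); rewrite ?mem_setU_shift_l ?le_ll.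
rewrite mem_setU_shift_r => /maxB[b bB cmp].
by exists (rshift b); rewrite ?mem_setU_shift_r ?le_rr.
Qed.

Lemma chain_union A B :
  chain le (setU_shift A B) = [&& chain la A, chain lb B & (A == set0) || (B == set0)].
Proof.
rewrite chainU (chain_imset le_ll) (chain_imset le_rr); congr [&& _, _ & _].
apply/forall_inP/orP => [cross | AB _ /imsetP[x xA ->]].
  case: (set_0Vmem A) => [-> | [x xA]]; [by left | right].
  apply/eqP/setP => y; rewrite inE; apply/negP => yB.
  by have /forall_inP/(_ _ (imset_f _ yB)) := cross _ (imset_f _ xA); rewrite le_lr le_rl.
apply/forall_inP => _ /imsetP[y yB ->].
by case: AB => /eqP AB; rewrite AB inE in xA yB.
Qed.

Lemma basic_union_l x : basic le (lshift x) = basic la x.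
Proof.
apply: basic_embed (@lshift_inj m n) le_ll _ _ _ => [a z | a b z | a z] /notin_codom_lshift[y ->];
  by rewrite ?le_rl ?le_lr.
Qed.

Lemma basic_union_r y : basic le (rshift y) = basic lb y.
Proof.
apply: basic_embed (@rshift_inj m n) le_rr _ _ _ => [a z | a b z | a z] /notin_codom_rshift[x ->];
  by rewrite ?le_rl ?le_lr.
Qed.

Lemma card_antichains_union : #|antichains le| = #|antichains la| * #|antichains lb|.
Proof. exact: card_sets_shift_mul antichain_union. Qed.

Lemma card_maximal_antichains_union :
  #|maximal_antichains le| = #|maximal_antichains la| * #|maximal_antichains lb|.
Proof. exact: card_sets_shift_mul maximal_antichain_union. Qed.

Lemma card_nonbasic_maximal_antichains_union :
  #|nonbasic_maximal_antichains le| =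
  #|nonbasic_maximal_antichains la| * #|nonbasic_maximal_antichains lb|.
Proof.
apply: card_sets_shift_mul => A B; rewrite maximal_antichain_union.
rewrite /setU_shift forall_in_setU !forall_in_imset andbACA.
congr (_ && _ && (_ && _)); apply: eq_forallb => v.
  by rewrite basic_union_l.
by rewrite basic_union_r.
Qed.

Lemma card_basic_elements_union :
  #|basic_elements le| = #|basic_elements la| + #|basic_elements lb|.
Proof.
rewrite -card_setU_shift; apply: eq_card => z.
case: (split_ordP z) => [x ->|y ->].
  by rewrite mem_setU_shift_l !inE basic_union_l.
by rewrite mem_setU_shift_r !inE basic_union_r.
Qed.

Hypotheses (la_refl : reflexive la) (lb_refl : reflexive lb).

Let le_refl : reflexive le.
Proof. by move=> z; case: (split_ordP z) => [x ->|y ->]; rewrite ?le_ll ?le_rr. Qed.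

Lemma maximal_chain_union (xa : 'I_m) (xb : 'I_n) A B :
  maximal_chain le (setU_shift A B) =
  (maximal_chain la A && (B == set0)) || ((A == set0) && maximal_chain lb B).
Proof.
apply/idP/idP.
  case/(maximal_chainP le_refl) => chU maxU; move: chU.
  rewrite chain_union => /and3P[chA chB /orP[/eqP A0 | /eqP B0]]; subst.
    rewrite eqxx /=; apply/orP; right; apply/(maximal_chainP lb_refl); split=> // y.
    rewrite -(mem_setU_shift_r (set0 : {set 'I_m}) B) => /maxU[c].
    case: (split_ordP c) => [a ->|b ->]; rewrite ?mem_setU_shift_l ?mem_setU_shift_r ?inE //.
    by rewrite (incomp_embed le_rr); exists b.
  rewrite eqxx andbT; apply/orP; left; apply/(maximal_chainP la_refl); split=> // x.
  rewrite -(mem_setU_shift_l A (set0 : {set 'I_n})) => /maxU[c].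
  case: (split_ordP c) => [a ->|b ->]; rewrite ?mem_setU_shift_l ?mem_setU_shift_r ?inE //.
  by rewrite (incomp_embed le_ll); exists a.
case/orP => /andP[].
  move=> mA /eqP->; have /set0Pn[a aA] := maximal_chain_neq0 la_refl xa mA.
  case/(maximal_chainP la_refl): mA => chA maxA; apply/(maximal_chainP le_refl).
  split=> [|z]; first by rewrite chain_union chA chain0 eqxx orbT.
  case: (split_ordP z) => [x ->|y ->].
    rewrite mem_setU_shift_l => /maxA[c cA xc].
    by exists (lshift c); rewrite ?mem_setU_shift_l ?(incomp_embed le_ll).
  by exists (lshift a); rewrite ?mem_setU_shift_l // incompC incomp_lr.
move=> /eqP-> mB; have /set0Pn[b bB] := maximal_chain_neq0 lb_refl xb mB.
case/(maximal_chainP lb_refl): mB => chB maxB; apply/(maximal_chainP le_refl).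
split=> [|z]; first by rewrite chain_union chB chain0 eqxx.
case: (split_ordP z) => [x ->|y ->].
  by exists (rshift b); rewrite ?mem_setU_shift_r // incomp_lr.
rewrite mem_setU_shift_r => /maxB[c cB yc].
by exists (rshift c); rewrite ?mem_setU_shift_r ?(incomp_embed le_rr).
Qed.

Lemma cutset_union (xa : 'I_m) (xb : 'I_n) S R :
  cutset le (setU_shift S R) = cutset la S && cutset lb R.
Proof.
apply/cutsetP/andP => [cutU | [/cutsetP cutS /cutsetP cutR] C].
  split; apply/cutsetP => C mC.
    have /cutU[z] : maximal_chain le (setU_shift C set0).
      by rewrite (maximal_chain_union xa xb) mC eqxx.
    case: (split_ordP z) => [x ->|y ->]; rewrite ?mem_setU_shift_l ?mem_setU_shift_r ?inE //.
    by exists x.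
  have /cutU[z] : maximal_chain le (setU_shift set0 C).
    by rewrite (maximal_chain_union xa xb) mC eqxx orbT.
  case: (split_ordP z) => [x ->|y ->]; rewrite ?mem_setU_shift_l ?mem_setU_shift_r ?inE //.
  by exists y.
rewrite -{1}(setU_shift_preimset C) (maximal_chain_union xa xb).
case/orP => [/andP[/cutS[x xS xC] _] | /andP[_ /cutR[y yR yC]]].
  by rewrite inE in xC; exists (lshift x); rewrite ?mem_setU_shift_l.
by rewrite inE in yC; exists (rshift y); rewrite ?mem_setU_shift_r.
Qed.

Lemma card_cutsets_union (xa : 'I_m) (xb : 'I_n) :
  #|cutsets le| = #|cutsets la| * #|cutsets lb|.
Proof. exact: card_sets_shift_mul (cutset_union xa xb). Qed.

End DisjointUnion.

(** * V-posets *)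

Section OnePoint.
Variable le : rel 'I_1.

Lemma basic_point x : basic le x.
Proof.
have plt_point u v : plt le u v = false by rewrite /plt !ord1 eqxx andbF.
rewrite basicE /has_incomparable_below /has_incomparable_above /has_twin_below.
by apply/and3P; split; apply/existsPn => u; try apply/existsPn => v; rewrite !plt_point.
Qed.

Lemma point_setT (A : {set 'I_1}) : ord0 \in A -> A = setT.
Proof. by move=> A0; apply/setP => x; rewrite inE ord1. Qed.

Lemma card_antichains_point : #|antichains le| = 2.
Proof.
transitivity #|[set: {set 'I_1}]|; last by rewrite card_all_sets card_ord.
by apply: eq_card => A; rewrite !inE; apply/antichainP => u v _ _; rewrite !ord1 eqxx.
Qed.

Lemma maximal_antichains_point : maximal_antichains le = [set setT].
Proof.
apply/setP => A; rewrite !inE; apply/maximal_antichainP/eqP => [[_ maxA] | ->].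
  apply: point_setT; apply: contraT => A0.
  by case: (maxA _ A0) => a; rewrite (ord1 a) (negbTE A0).
by split=> [|x]; [apply/antichainP => u v _ _; rewrite !ord1 eqxx | rewrite inE].
Qed.

Lemma card_basic_elements_point : #|basic_elements le| = 1.
Proof.
transitivity #|[set: 'I_1]|; last by rewrite cardsT card_ord.
by apply: eq_card => x; rewrite !inE basic_point.
Qed.

Lemma card_nonbasic_maximal_antichains_point : #|nonbasic_maximal_antichains le| = 0.
Proof.
apply/eqP; rewrite cards_eq0; apply/eqP/setP => A; rewrite !inE.
apply/negP => /andP[mA /forall_inP nb].
have : A \in maximal_antichains le by rewrite inE.
rewrite maximal_antichains_point => /set1P A_T.
by have := nb ord0; rewrite A_T inE basic_point => /(_ isT).
Qed.

Lemma card_cutsets_point : reflexive le -> #|cutsets le| = 1.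
Proof.
move=> le_refl; transitivity #|[set setT : {set 'I_1}]|; last exact: cards1.
apply: eq_card => S; rewrite !inE; apply/cutsetP/eqP => [cutS | -> C mC].
  have maxT : maximal_chain le setT.
    apply/(maximal_chainP le_refl); split=> [|x]; last by rewrite inE.
    by apply/chainP => u v _ _; rewrite !ord1 le_refl.
  by have [x xS _] := cutS _ maxT; apply: point_setT; rewrite (ord1 x) in xS.
have /set0Pn[x xC] := maximal_chain_neq0 le_refl ord0 mC.
by exists x; rewrite ?inE.
Qed.

End OnePoint.

Lemma vsize_gt0 t : 0 < vsize t.
Proof. by elim: t => //= a IHa b _; rewrite addn_gt0 IHa. Qed.

Definition vpoint t : 'I_(vsize t) := Ordinal (vsize_gt0 t).

Lemma vord_point x y : vord VPoint x y.
Proof. by rewrite /vord !ord1. Qed.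

Lemma vord_union a b : is_disjoint_union (vord a) (vord b) (vord (VUnion a b)).
Proof.
have nlt_shift (x : 'I_(vsize b)) : (vsize a + x < vsize a) = false.
  by rewrite ltnNge leq_addr.
split=> x y; rewrite /vord /= ?ltn_ord ?nlt_shift ?andbF //=.
- by rewrite !leq_addr !addKn.
- by rewrite leqNgt ltn_ord.
- by rewrite [vsize a <= x]leqNgt ltn_ord andbF.
Qed.

Lemma vord_top a : adjoins_top (vord a) (vord (VTop a)).
Proof.
split=> [x y | z | x]; rewrite /vord ?lift_max /=.
- by rewrite (ltn_eqF (ltn_ord y)) !ltn_ord.
- by rewrite -ltnS ltn_ord andbT; apply/orP; left; apply/eqP.
- by rewrite (ltn_eqF (ltn_ord x)) ltnn.
Qed.

Lemma vord_bot a : adjoins_bottom (vord a) (vord (VBot a)).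
Proof.
split=> [x y | z | x]; rewrite /dual_rel /vord ?lift_max /=.
- by rewrite (ltn_eqF (ltn_ord y)) !ltn_ord.
- by rewrite -ltnS ltn_ord andbT; apply/orP; left; apply/eqP.
- by rewrite (ltn_eqF (ltn_ord x)) ltnn andbF.
Qed.

Lemma partial_order_vord t : partial_order (vord t).
Proof.
elim: t => [|a IHa b IHb|a IHa|a IHa].
- by split=> [x | x y _ | x y z _ _]; rewrite ?vord_point // !ord1.
- exact: partial_order_union (vord_union a b) IHa IHb.
- exact: partial_order_top (vord_top a) IHa.
- exact: partial_order_bot (vord_bot a) IHa.
Qed.

Local Open Scope ring_scope.

Lemma vpoly_unique (R : comNzRingType) (x y : R) (f : vtree -> R) :
  f VPoint = x ->
  (forall a b, f (VUnion a b) = f a * f b) ->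
  (forall a, f (VTop a) = f a + y ^+ vsize a) ->
  (forall a, f (VBot a) = f a + y ^+ vsize a) ->
  forall t, vpoly t x y = f t.
Proof.
by move=> fP fU fT fB; elim=> [|a IHa b IHb|a IHa|a IHa] /=; rewrite ?fP ?fU ?fT ?fB ?IHa ?IHb.
Qed.

Lemma vpoly_maximal_antichains t :
  vpoly t (1 : int) 1 = #|maximal_antichains (vord t)|%:Z.
Proof.
move: t; apply: vpoly_unique => [|a b|a|a]; rewrite ?expr1n.
- by rewrite maximal_antichains_point cards1.
- by rewrite (card_maximal_antichains_union (vord_union a b)) PoszM.
- by rewrite (card_maximal_antichains_top (vord_top a) (vpoint a)) PoszD.
- by rewrite (card_maximal_antichains_bot (vord_bot a) (vpoint a)) PoszD.
Qed.

Lemma vpoly_basic_elements (R : comNzRingType) (x : R) t :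
  vpoly t x 0 = x ^+ #|basic_elements (vord t)|.
Proof.
have zero_pow a : (0 : R) ^+ vsize a = 0 by rewrite expr0n eqn0Ngt vsize_gt0.
move: t; apply: vpoly_unique => [|a b|a|a]; rewrite ?zero_pow ?addr0.
- by rewrite card_basic_elements_point expr1.
- by rewrite (card_basic_elements_union (vord_union a b)) exprD.
- by rewrite (card_basic_elements_top (vord_top a) (partial_order_vord a) (vpoint a)).
- by rewrite (card_basic_elements_bot (vord_bot a) (partial_order_vord a) (vpoint a)).
Qed.

Lemma vpoly_nonbasic_maximal_antichains t :
  vpoly t (0 : int) 1 = #|nonbasic_maximal_antichains (vord t)|%:Z.
Proof.
move: t; apply: vpoly_unique => [|a b|a|a]; rewrite ?expr1n.
- by rewrite card_nonbasic_maximal_antichains_point.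
- by rewrite (card_nonbasic_maximal_antichains_union (vord_union a b)) PoszM.
- rewrite (card_nonbasic_maximal_antichains_top (vord_top a) (partial_order_vord a) (vpoint a)).
  by rewrite PoszD.
- rewrite (card_nonbasic_maximal_antichains_bot (vord_bot a) (partial_order_vord a) (vpoint a)).
  by rewrite PoszD.
Qed.

Lemma vpoly_antichains t : vpoly t (2 : int) 1 = #|antichains (vord t)|%:Z.
Proof.
move: t; apply: vpoly_unique => [|a b|a|a]; rewrite ?expr1n.
- by rewrite card_antichains_point.
- by rewrite (card_antichains_union (vord_union a b)) PoszM.
- by rewrite (card_antichains_top (vord_top a)) PoszD.
- by rewrite (card_antichains_bot (vord_bot a)) PoszD.
Qed.

Lemma vpoly_cutsets t : vpoly t (1 : int) 2 = #|cutsets (vord t)|%:Z.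
Proof.
have pow2 a : 2 ^+ vsize a = (2 ^ vsize a)%N%:Z by rewrite -natz natrX.
have vord_refl a : reflexive (vord a) by case: (partial_order_vord a).
move: t; apply: vpoly_unique => [|a b|a|a]; rewrite ?pow2.
- by rewrite (card_cutsets_point (vord_refl VPoint)).
- rewrite (card_cutsets_union (vord_union a b) (vord_refl a) (vord_refl b) (vpoint a) (vpoint b)).
  by rewrite PoszM.
- by rewrite (card_cutsets_top (vord_top a) (partial_order_vord a)) PoszD.
- by rewrite (card_cutsets_bot (vord_bot a) (partial_order_vord a)) PoszD.
Qed.

Lemma vpoly_2_2 t : vpoly t (2 : int) 2 = 2 ^+ vsize t.
Proof.
move: t; apply: vpoly_unique => [|a b|a|a] /=; rewrite ?expr1 ?exprD //.
all: by rewrite exprS mulr_natl mulr2n.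
Qed.

Theorem proposition3p19 (t : vtree) :
  let T := 'I_(vsize t) in
  let le := vord t in
  vpoly t (1 : int) 1 = (#|[set A : {set T} | maximal_antichain le A]|)%:Z /\
  (forall (R : comNzRingType) (x : R),
      vpoly t x 0 = x ^+ #|[set v : T | basic le v]|) /\
  vpoly t (0 : int) 1
    = (#|[set A : {set T} | maximal_antichain le A &
                            [forall v in A, ~~ basic le v]]|)%:Z /\
  vpoly t (2 : int) 1 = (#|[set A : {set T} | antichain le A]|)%:Z /\
  vpoly t (1 : int) 2 = (#|[set S : {set T} | cutset le S]|)%:Z /\
  vpoly t (2 : int) 2 = 2 ^+ vsize t.
Proof.
split; first exact: vpoly_maximal_antichains.
split; first by move=> R x; apply: vpoly_basic_elements.
split; first exact: vpoly_nonbasic_maximal_antichains.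
split; first exact: vpoly_antichains.
split; first exact: vpoly_cutsets.
exact: vpoly_2_2.
Qed.
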